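(* Let $n,k,h,d$ be integers with $k\ge1$ and $2\le h\le n-d\le n-k$, set $s=d+1-k$, let $F$ be a finite field with $|F|\ge sn$, let $\{\lambda_{i,j}: i\in[n],\ j\in\{0,\dots,s-1\}\}$ be $sn$ distinct elements of $F$, and let $\mathcal{C}$ be the set of all $C=(C_1,\dots,C_n)$, $C_i=(c_{i,b,a}: b\in\{1,\dots,d+h-k\},\ a\in\{0,\dots,s^n-1\})$, satisfying $\sum_{i=1}^n \lambda_{i,a_i}^t c_{i,b,a}=0$ for all $t\in\{0,\dots,n-k-1\}$, $b\in\{1,\dots,d+h-k\}$, $a\in\{0,\dots,s^n-1\}$. Let $\mathcal{R}\subseteq[n]\setminus[h]$ with $|\mathcal{R}|=d$ and let $u\in[h]$. Then for every $C\in\mathcal{C}$, the values $$\{c_{u,b,a}: a\in\{0,\dots,s^n-1\},\ b\in\{1,\dots,s-1,s+u-1\}\}\ \cup\ \Big\{\sum_{j=0}^{s-2}c_{i,j+1,a(u,a_u\oplus j)}+c_{i,s+u-1,a(u,a_u\oplus(s-1))}: a\in\{0,\dots,s^n-1\},\ i\in[h]\setminus\{u\}\Big\}$$ are uniquely determined by the values $$\Big\{\sum_{j=0}^{s-2}c_{i,j+1,a(u,a_u\oplus j)}+c_{i,s+u-1,a(u,a_u\oplus(s-1))}: a\in\{0,\dots,s^n-1\},\ i\in\mathcal{R}\Big\},$$ i.e. any two codewords of $\mathcal{C}$ agreeing on the latter values agree on the former values.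
   Context: $[n]=\{1,\dots,n\}$. For $a\in\{0,\dots,s^n-1\}$, $(a_1,\dots,a_n)\in\{0,\dots,s-1\}^n$ denotes its $n$-digit $s$-ary expansion, and $a$ is identified with this tuple. For $i\in[n]$, $v\in\{0,\dots,s-1\}$, $a(i,v)$ denotes the element obtained from $a$ by replacing the $i$th digit $a_i$ by $v$; $\oplus$ denotes addition modulo $s$. Empty sums (when $s=1$) are zero. *)

From HB Require Import structures.
From mathcomp Require Import all_boot all_order all_algebra.
Set Implicit Arguments. Unset Strict Implicit. Unset Printing Implicit Defensive.
Import GRing.Theory.
Local Open Scope ring_scope.

(* s-ary n-digit index a, identified with its digit tuple (a_1,...,a_n);
   index i in [n] is represented by i-1 : 'I_n. *)
Definition digits (n s : nat) := {ffun 'I_n -> 'I_s}.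

Lemma ord_pos (s : nat) (v : 'I_s) : (0 < s)%N.
Proof. by apply: leq_ltn_trans (ltn_ord v). Qed.

Definition addmod (s : nat) (v : 'I_s) (j : nat) : 'I_s :=
  Ordinal (ltn_pmod (v + j) (ord_pos v)).

Definition upd (n s : nat) (a : digits n s) (i : 'I_n) (v : 'I_s) : digits n s :=
  [ffun j => if j == i then v else a j].

(* A codeword: C i b a = c_{i+1, b+1, a}  (b : 'I_B, B = d+h-k). *)
Definition cword (F : Type) (n s B : nat) := 'I_n -> 'I_B -> digits n s -> F.

(* access a coordinate with a nat (0-based) b-index; out-of-range gives 0
   (only ever used with in-range indices). *)
Definition cb (F : nzRingType) (n s B : nat) (C : cword F n s B)
    (i : 'I_n) (m : nat) (a : digits n s) : F :=
  match @insub nat (fun x => (x < B)%N) _ m with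
  | Some b => C i b a
  | None => 0
  end.

Definition in_code (F : nzRingType) (n k s B : nat) (lambda : 'I_n -> 'I_s -> F)
    (C : cword F n s B) : Prop :=
  forall (t : nat) (b : 'I_B) (a : digits n s), (t < n - k)%N ->
    \sum_(i < n) (lambda i (a i)) ^+ t * C i b a = 0.

Definition repsum (F : nzRingType) (n s B : nat) (C : cword F n s B)
    (u : 'I_n) (i : 'I_n) (a : digits n s) : F :=
  \sum_(j < s.-1) cb C i j (upd a u (addmod (a u) j))
  + cb C i (s.-1 + u) (upd a u (addmod (a u) s.-1)).

From HB Require Import structures.
From mathcomp Require Import all_boot all_order all_algebra zify.
Set Implicit Arguments. Unset Strict Implicit. Unset Printing Implicit Defensive.
Import GRing.Theory.
Local Open Scope ring_scope.

(* Fix a digit tuple a and sum the parity checks at the s coordinates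
   a(u, a_u (+) j), j < s, each taken at its own row b_j (b_j = j + 1 for
   j < s - 1, and b_{s-1} = s + u - 1).  For a node i <> u the digit a_i never
   moves, so the i-th terms add up to lambda_{i,a_i}^t times the repair sum of
   node i, while node u contributes the s values c_{u,b_j,a(u,a_u (+) j)} with
   the s distinct evaluation points lambda_{u,a_u (+) j}.  This is a Vandermonde
   system with n - k equations in (n - 1 - d) + s = n - k unknowns once the d
   repair sums of the nodes of R are known; by linearity it suffices to show that
   a codeword whose repair sums vanish on R has all these unknowns equal to 0. *)

Lemma vanishing_moments_eq0 (R : idomainType) (I : finType) (S : {pred I})
    (p x : I -> R) (m : nat) :
  {in S &, injective p} -> {in [predC S], forall i, x i = 0} -> (#|S| <= m)%N ->
  (forall t, (t < m)%N -> \sum_i p i ^+ t * x i = 0) ->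
  forall j, x j = 0.
Proof.
move=> p_inj x_supp cardS moments j.
have [jS|jNS] := boolP (j \in S); last exact: x_supp.
pose q := \prod_(i <- enum [predD1 S & j]) ('X - (p i)%:P).
have size_q : (size q <= m)%N.
  by rewrite size_prod_XsubC -cardE; apply: leq_trans cardS; rewrite (cardD1 j S) jS.
have q_sum : \sum_i q.[p i] * x i = 0.
  under eq_bigr do rewrite (horner_coef_wide _ size_q) mulr_suml.
  rewrite exchange_big big1 // => t _.
  under eq_bigr do rewrite -mulrA.
  by rewrite -mulr_sumr moments ?mulr0.
have q_root i : i != j -> q.[p i] * x i = 0.
  move=> ij; have [iS|iNS] := boolP (i \in S); last by rewrite x_supp ?mulr0.
  rewrite horner_prod (big_rem i) ?mem_enum ?inE ?ij ?iS //=.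
  by rewrite hornerXsubC subrr !mul0r.
have q_pj : q.[p j] != 0.
  rewrite horner_prod prodf_seq_neq0; apply/allP => i; rewrite mem_enum.
  case/andP=> ij iS; rewrite hornerXsubC subr_eq0; apply: contra ij => /eqP pji.
  by rewrite (p_inj _ _ jS iS pji).
rewrite (bigD1 j) //= big1 ?addr0 in q_sum; last by move=> i; apply: q_root.
by move/eqP: q_sum; rewrite mulf_eq0 (negbTE q_pj) => /eqP.
Qed.

Section Codewords.
Variables (F : nzRingType) (n s B : nat).
Implicit Types (C D : cword F n s B) (a : digits n s) (u i : 'I_n).

Definition cword_sub C C' : cword F n s B := fun i b a => C i b a - C' i b a.

Lemma cb_ord C i (b : 'I_B) a : cb C i b a = C i b a.
Proof. by rewrite /cb valK. Qed.

Lemma cb_sub C C' i m a : cb (cword_sub C C') i m a = cb C i m a - cb C' i m a.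
Proof. by rewrite /cb; case: insubP => [b _ _|_] //; rewrite subr0. Qed.

Lemma repsum_sub C C' u i a :
  repsum (cword_sub C C') u i a = repsum C u i a - repsum C' u i a.
Proof.
rewrite /repsum cb_sub opprD addrACA -sumrB.
by congr (_ + _); apply: eq_bigr => j _; rewrite cb_sub.
Qed.

Lemma in_code_sub k lambda C C' :
  in_code k lambda C -> in_code k lambda C' -> in_code k lambda (cword_sub C C').
Proof.
move=> HC HC' t b a ht; rewrite /cword_sub.
under eq_bigr do rewrite mulrBr.
by rewrite sumrB HC ?HC' ?subrr.
Qed.

Lemma in_code_cb k lambda C : in_code k lambda C ->
  forall t m a, (t < n - k)%N -> \sum_(i < n) lambda i (a i) ^+ t * cb C i m a = 0.
Proof.
move=> HC t m a ht; rewrite /cb; case: insubP => [b _ _|_]; first exact: HC.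
by rewrite big1 // => i _; rewrite mulr0.
Qed.

Lemma addmod_inj (v : 'I_s) j1 j2 : (j1 < s)%N -> (j2 < s)%N ->
  addmod v j1 = addmod v j2 -> j1 = j2.
Proof.
by move=> lt1 lt2 /(congr1 val) /= /eqP; rewrite eqn_modDl !modn_small // => /eqP.
Qed.

Lemma upd_id a u v : upd a u v u = v.
Proof. by rewrite ffunE eqxx. Qed.

Lemma upd_neq a u v i : i != u -> upd a u v i = a i.
Proof. by rewrite ffunE => /negbTE ->. Qed.

Lemma upd_addmod_surj a u j : (j < s)%N ->
  exists a', upd a' u (addmod (a' u) j) = a.
Proof.
move=> lt_js; exists (upd a u (addmod (a u) (s - j))).
apply/ffunP => i; rewrite !ffunE; case: eqVneq => [->|//].
rewrite eqxx; apply: val_inj => /=.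
by rewrite modnDml -addnA subnK ?(ltnW lt_js) // modnDr modn_small.
Qed.

(* b_j of the repair sums, shifted to the 0-based rows of [cword] *)
Definition rep_row (u : 'I_n) (j : nat) : nat :=
  if (j < s.-1)%N then j else (s.-1 + u)%N.

Lemma repsum_shifts C u i a : (0 < s)%N ->
  repsum C u i a = \sum_(j < s) cb C i (rep_row u j) (upd a u (addmod (a u) j)).
Proof.
move=> s_gt0.
have split_last (G : nat -> F) : \sum_(j < s) G j = \sum_(j < s.-1) G j + G s.-1.
  by rewrite -(prednK s_gt0) big_ord_recr.
rewrite (split_last (fun j => cb C i (rep_row u j) (upd a u (addmod (a u) j)))).
rewrite /repsum /rep_row ltnn; congr (_ + _).
by apply: eq_bigr => j _; rewrite ltn_ord.
Qed.

Lemma in_code_shifts k lambda C u a t : (0 < s)%N -> in_code k lambda C ->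
  (t < n - k)%N ->
  \sum_(i < n | i != u) lambda i (a i) ^+ t * repsum C u i a
  + \sum_(j < s) lambda u (addmod (a u) j) ^+ t
                 * cb C u (rep_row u j) (upd a u (addmod (a u) j)) = 0.
Proof.
move=> s_gt0 HC ht.
have checks0 : \sum_(j < s) \sum_(i < n) lambda i (upd a u (addmod (a u) j) i) ^+ t
                 * cb C i (rep_row u j) (upd a u (addmod (a u) j)) = 0.
  by rewrite big1 // => j _; apply: (in_code_cb HC).
rewrite -{}[RHS]checks0 [RHS]exchange_big [RHS](bigD1 u) //= [RHS]addrC.
congr (_ + _).
  apply: eq_bigr => i iu; rewrite (repsum_shifts C u i a s_gt0) mulr_sumr.
  by apply: eq_bigr => j _; rewrite upd_neq.
by apply: eq_bigr => j _; rewrite upd_id.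
Qed.

Lemma shifted_rows_eq0 D u : (0 < s)%N ->
  (forall a (j : 'I_s), cb D u (rep_row u j) (upd a u (addmod (a u) j)) = 0) ->
  forall a (b : 'I_B), (b < s.-1)%N \/ nat_of_ord b = (s.-1 + u)%N -> D u b a = 0.
Proof.
move=> s_gt0 D0 a b b_row.
pose j := if (b < s.-1)%N then nat_of_ord b else s.-1.
have lt_js : (j < s)%N by rewrite /j; case: ifP; lia.
have [a' a'_shift] := upd_addmod_surj a u lt_js.
have := D0 a' (Ordinal lt_js); rewrite /= a'_shift -(cb_ord D).
congr (cb _ _ _ _ = 0); rewrite /rep_row /j.
case: b_row => [b_lt | b_eq]; first by rewrite !b_lt.
have b_ge : (s.-1 + u < s.-1)%N = false by rewrite ltnNge leq_addr.
by rewrite b_eq b_ge ltnn.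
Qed.

End Codewords.

Section Repair.
Variables (F : idomainType) (n k s B : nat) (lambda : 'I_n -> 'I_s -> F).
Variables (R : {set 'I_n}) (u : 'I_n).
Hypothesis lambda_inj : injective (fun p : 'I_n * 'I_s => lambda p.1 p.2).
Hypotheses (s_gt0 : (0 < s)%N) (uNR : u \notin R).
Hypothesis unknowns_le : (n - #|R|.+1 + s <= n - k)%N.

Lemma repair_eq0 (D : cword F n s B) : in_code k lambda D ->
  (forall a i, i \in R -> repsum D u i a = 0) ->
  (forall a (j : 'I_s), cb D u (rep_row s u j) (upd a u (addmod (a u) j)) = 0)
  /\ (forall a i, i != u -> repsum D u i a = 0).
Proof.
move=> HD DR.
pose x a (z : 'I_n + 'I_s) : F :=
  match z with
  | inl i => if i == u then 0 else repsum D u i a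
  | inr j => cb D u (rep_row s u j) (upd a u (addmod (a u) j))
  end.
suff x0 a z : x a z = 0.
  split=> [a j|a i iu]; first exact: (x0 a (inr j)).
  by have := x0 a (inl i); rewrite /x (negbTE iu).
pose S := [pred z : 'I_n + 'I_s | if z is inl i then i \notin u |: R else true].
pose p (z : 'I_n + 'I_s) :=
  match z with inl i => lambda i (a i) | inr j => lambda u (addmod (a u) j) end.
move: z; apply: (@vanishing_moments_eq0 _ _ S p _ (n - k)).
- move=> [i|j] [i'|j']; rewrite !inE => iS i'S.
  + by move/(@lambda_inj (i, a i) (i', a i'))/(congr1 fst) => /= ->.
  + move/(@lambda_inj (i, a i) (u, addmod (a u) j'))/(congr1 fst) => /= iu.
    by rewrite iu eqxx in iS.
  + move/(@lambda_inj (u, addmod (a u) j) (i', a i'))/(congr1 fst) => /= ui.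
    by rewrite -ui eqxx in i'S.
  + move/(@lambda_inj (u, addmod (a u) j) (u, addmod (a u) j'))/(congr1 snd) => /=.
    by move/(addmod_inj (ltn_ord j) (ltn_ord j'))/val_inj->.
- move=> [i|//]; rewrite !inE negbK /x.
  by case: eqVneq => //= _ /DR.
- have card_S : #|S| = (#|~: (u |: R)| + s)%N.
    rewrite -[LHS]sum1_card big_sumType /= -sum1_card; congr (_ + _)%N.
      by apply: eq_bigl => i; rewrite !inE.
    by rewrite -[RHS]card_ord -sum1_card; apply: eq_bigl => j; rewrite !inE.
  have card_out : #|~: (u |: R)| = (n - #|R|.+1)%N.
    have := cardsC (u |: R); rewrite cardsU1 uNR add1n card_ord.
    by move/(congr1 (subn^~ #|R|.+1)); rewrite addKn.
  by rewrite card_S card_out.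
- move=> t ht; rewrite big_sumType (bigD1 u) //= eqxx mulr0 add0r.
  under eq_bigr => i iu do rewrite (negbTE iu).
  exact: (in_code_shifts u a s_gt0 HD ht).
Qed.

End Repair.

Theorem mainTheorem5 (n k h d : nat) (F : finFieldType)
  (lambda : 'I_n -> 'I_(d.+1 - k) -> F)
  (R : {set 'I_n}) (u : 'I_n) :
  (1 <= k)%N -> (2 <= h)%N -> (h <= n - d)%N -> (n - d <= n - k)%N ->
  ((d.+1 - k) * n <= #|{: F}|)%N ->
  injective (fun p : 'I_n * 'I_(d.+1 - k) => lambda p.1 p.2) ->
  (forall i, i \in R -> (h <= i)%N) -> #|R| = d ->
  (u < h)%N ->
  forall C C' : cword F n (d.+1 - k) (d + h - k),
    in_code k lambda C -> in_code k lambda C' ->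
    (forall (a : digits n (d.+1 - k)) (i : 'I_n), i \in R ->
        repsum C u i a = repsum C' u i a) ->
    (forall (a : digits n (d.+1 - k)) (b : 'I_(d + h - k)),
        (b < (d.+1 - k).-1)%N \/ nat_of_ord b = ((d.+1 - k).-1 + u)%N ->
        C u b a = C' u b a)
    /\
    (forall (a : digits n (d.+1 - k)) (i : 'I_n), (i < h)%N -> i != u ->
        repsum C u i a = repsum C' u i a).
Proof.
(* |F| >= s n only guarantees that an injective lambda exists. *)
move=> _ h_ge2 h_le d_ge_k _ lambda_inj R_high card_R u_lt C C' HC HC' CR.
have uNR : u \notin R by apply/negP => /R_high; lia.
have s_gt0 : (0 < d.+1 - k)%N by lia.
have unknowns_le : (n - #|R|.+1 + (d.+1 - k) <= n - k)%N by rewrite card_R; lia.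
have D_R a i : i \in R -> repsum (cword_sub C C') u i a = 0.
  by move=> iR; rewrite repsum_sub CR ?subrr.
have [D_u D_rep] :=
  repair_eq0 lambda_inj s_gt0 uNR unknowns_le (in_code_sub HC HC') D_R.
split=> [a b b_row | a i _ iu]; apply/eqP; rewrite -subr_eq0; apply/eqP.
  exact: (shifted_rows_eq0 s_gt0 D_u).
by rewrite -repsum_sub D_rep.
Qed.
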